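(* Consider the two-dimensional forward Euler finite difference scheme $\mathbf{u}_{ij}^{n+1}=\mathbf{u}_{ij}^n-\lambda^x(\mathbf{f}_{i+1/2,j}-\mathbf{f}_{i-1/2,j})-\lambda^y(\mathbf{g}_{i,j+1/2}-\mathbf{g}_{i,j-1/2})$, $\lambda^x=\Delta t/\Delta x$, $\lambda^y=\Delta t/\Delta y$, with numerical fluxes $\mathbf{f}_{i+1/2,j}=\alpha^x_{i+1/2,j}(\mathbf{w}^{x,+}_{i+1/2,j}-\mathbf{w}^{x,-}_{i+1/2,j})$ and $\mathbf{g}_{i,j+1/2}=\alpha^y_{i,j+1/2}(\mathbf{w}^{y,+}_{i,j+1/2}-\mathbf{w}^{y,-}_{i,j+1/2})$, where $\mathbf{w}^{x,\pm}_{i+1/2,j},\mathbf{w}^{y,\pm}_{i,j+1/2}\in\mathbb{R}^6$ are given interface values, $\alpha^x_{i+1/2,j}=\max\{\alpha^x(\mathbf{u}^n_{ij}),\alpha^x(\mathbf{u}^n_{i+1,j})\}$, $\alpha^y_{i,j+1/2}=\max\{\alpha^y(\mathbf{u}^n_{ij}),\alpha^y(\mathbf{u}^n_{i,j+1})\}$. Let $\mathbf{w}^{x,\pm}_{ij}=\mathbf{w}^{x,\pm}(\mathbf{u}^n_{ij})$, $\mathbf{w}^{y,\pm}_{ij}=\mathbf{w}^{y,\pm}(\mathbf{u}^n_{ij})$, and $\mathbf{q}^{x,+,*}_{ij}=\frac{1}{1-\hat w_N}(\mathbf{w}^{x,+}_{ij}-\hat w_N\mathbf{w}^{x,+}_{i+1/2,j})$,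 $\mathbf{q}^{x,-,*}_{ij}=\frac{1}{1-\hat w_1}(\mathbf{w}^{x,-}_{ij}-\hat w_1\mathbf{w}^{x,-}_{i-1/2,j})$, $\mathbf{q}^{y,+,*}_{ij}=\frac{1}{1-\hat w_N}(\mathbf{w}^{y,+}_{ij}-\hat w_N\mathbf{w}^{y,+}_{i,j+1/2})$, $\mathbf{q}^{y,-,*}_{ij}=\frac{1}{1-\hat w_1}(\mathbf{w}^{y,-}_{ij}-\hat w_1\mathbf{w}^{y,-}_{i,j-1/2})$. Assume that for all $i,j$: (1) $\mathbf{u}^n_{ij}\in\mathbb{U}_{\mathrm{ad}}$; (2) $\mathbf{q}^{x,\pm,*}_{ij}\in\mathbb{U}_{\mathrm{ad}}$ and $\mathbf{w}^{x,\pm}_{i+1/2,j}\in\mathbb{U}_{\mathrm{ad}}$; (3) $\mathbf{q}^{y,\pm,*}_{ij}\in\mathbb{U}_{\mathrm{ad}}$ and $\mathbf{w}^{y,\pm}_{i,j+1/2}\in\mathbb{U}_{\mathrm{ad}}$. Then the scheme is positivity preserving, i.e. $\mathbf{u}^{n+1}_{ij}\in\mathbb{U}_{\mathrm{ad}}$ for all $i,j$, provided $\left(\frac{\alpha^x}{\Delta x}+\frac{\alpha^y}{\Delta y}\right)\Delta t\le\hat w_1$, where $\alpha^x=\max_{i,j}\alpha^x(\mathbf{u}^n_{ij})$ and $\alpha^y=\max_{i,j}\alpha^y(\mathbf{u}^n_{ij})$.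
   Context: Ten-Moment equations in 2-D: conservative variable $\mathbf{u}=(\rho,\rho v_1,\rho v_2,E_{11},E_{12},E_{22})^\top$; pressure components $p_{11}=2E_{11}-\rho v_1^2$, $p_{12}=2E_{12}-\rho v_1v_2$, $p_{22}=2E_{22}-\rho v_2^2$; $\mathbb{U}_{\mathrm{ad}}=\{\mathbf{u}:\rho>0,\ \mathbf{p}\text{ positive definite}\}$. Fluxes: $\mathbf{f}(\mathbf{u})=\big(\rho v_1,\ \rho v_1^2+p_{11},\ \rho v_1v_2+p_{12},\ (E_{11}+p_{11})v_1,\ E_{12}v_1+\tfrac12(p_{11}v_2+p_{12}v_1),\ E_{22}v_1+p_{12}v_2\big)^\top$ and $\mathbf{g}(\mathbf{u})=\big(\rho v_2,\ \rho v_1v_2+p_{12},\ \rho v_2^2+p_{22},\ E_{11}v_2+p_{12}v_1,\ E_{12}v_2+\tfrac12(p_{12}v_2+p_{22}v_1),\ (E_{22}+p_{22})v_2\big)^\top$. Wave speeds $\alpha^x(\mathbf{u})=|v_1|+\sqrt{3p_{11}/\rho}$, $\alpha^y(\mathbf{u})=|v_2|+\sqrt{3p_{22}/\rho}$. $\mathbf{w}^{x,\pm}(\mathbf{u})=\frac12(\mathbf{u}\pm\mathbf{f}(\mathbf{u})/\alpha^x(\mathbf{u}))$, $\mathbf{w}^{y,\pm}(\mathbf{u})=\frac12(\mathbf{u}\pm\mathbf{g}(\mathbf{u})/\alpha^y(\mathbf{u}))$. Uniform rectangular mesh with nodes $(x_i,y_j)$, spacings $\Delta x,\Delta y$. $\hat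 w_1,\dots,\hat w_N$ are the normalized weights of the $N$-point Gauss–Lobatto rule with $N\ge4$, so $\hat w_1=\hat w_N$ (for $N=4$, $\hat w_1=1/12$). In the paper the interface values are $\mathbf{w}^{x,\pm}_{i+1/2,j}=\pm\mathbf{f}^\pm_{i+1/2,j}/\alpha^x_{i+1/2,j}$ with $\mathbf{f}^\pm_{i+1/2,j}$ WENO reconstructions of the split fluxes $\frac12(\mathbf{f}(\mathbf{u})\pm\alpha^x_{i+1/2,j}\mathbf{u})$ (similarly in $y$), possibly modified by a scaling limiter. *)

From Stdlib Require Import Reals ZArith.
Open Scope R_scope.

(* Conservative variable u = (rho, rho v1, rho v2, E11, E12, E22). *)
Record U6 : Type := mkU6 { rho : R; m1 : R; m2 : R; e11 : R; e12 : R; e22 : R }.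

Definition uadd (a b : U6) : U6 :=
  mkU6 (rho a + rho b) (m1 a + m1 b) (m2 a + m2 b)
       (e11 a + e11 b) (e12 a + e12 b) (e22 a + e22 b).
Definition uscale (c : R) (a : U6) : U6 :=
  mkU6 (c * rho a) (c * m1 a) (c * m2 a) (c * e11 a) (c * e12 a) (c * e22 a).
Definition usub (a b : U6) : U6 := uadd a (uscale (-1) b).

Definition v1 (u : U6) : R := m1 u / rho u.
Definition v2 (u : U6) : R := m2 u / rho u.
Definition p11 (u : U6) : R := 2 * e11 u - rho u * v1 u ^ 2.
Definition p12 (u : U6) : R := 2 * e12 u - rho u * v1 u * v2 u.
Definition p22 (u : U6) : R := 2 * e22 u - rho u * v2 u ^ 2.

Definition pos_def2 (a b c : R) : Prop :=
  forall x y : R, (x <> 0 \/ y <> 0) -> a * x * x + 2 * b * x * y + c * y * y > 0.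

Definition Uad (u : U6) : Prop := rho u > 0 /\ pos_def2 (p11 u) (p12 u) (p22 u).

Definition fluxf (u : U6) : U6 :=
  mkU6 (rho u * v1 u)
       (rho u * v1 u ^ 2 + p11 u)
       (rho u * v1 u * v2 u + p12 u)
       ((e11 u + p11 u) * v1 u)
       (e12 u * v1 u + / 2 * (p11 u * v2 u + p12 u * v1 u))
       (e22 u * v1 u + p12 u * v2 u).

Definition fluxg (u : U6) : U6 :=
  mkU6 (rho u * v2 u)
       (rho u * v1 u * v2 u + p12 u)
       (rho u * v2 u ^ 2 + p22 u)
       (e11 u * v2 u + p12 u * v1 u)
       (e12 u * v2 u + / 2 * (p12 u * v2 u + p22 u * v1 u))
       ((e22 u + p22 u) * v2 u).

Definition alphax (u : U6) : R := Rabs (v1 u) + sqrt (3 * p11 u / rho u).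
Definition alphay (u : U6) : R := Rabs (v2 u) + sqrt (3 * p22 u / rho u).

Definition wxp (u : U6) : U6 := uscale (/ 2) (uadd u (uscale (/ alphax u) (fluxf u))).
Definition wxm (u : U6) : U6 := uscale (/ 2) (usub u (uscale (/ alphax u) (fluxf u))).
Definition wyp (u : U6) : U6 := uscale (/ 2) (uadd u (uscale (/ alphay u) (fluxg u))).
Definition wym (u : U6) : U6 := uscale (/ 2) (usub u (uscale (/ alphay u) (fluxg u))).

(* Normalized endpoint weight of the N-point Gauss-Lobatto rule on a unit
   interval: w_1 = w_N = 1/(N(N-1)) (e.g. 1/12 for N = 4). *)
Definition gl_w1 (N : nat) : R := / (INR N * (INR N - 1)).
Definition gl_wN (N : nat) : R := gl_w1 N.

(* Mesh data: u : Z -> Z -> U6 is u^n_{ij}.  Interface values are indexed by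
   the left/lower cell: Wxp i j = w^{x,+}_{i+1/2,j}, Wyp i j = w^{y,+}_{i,j+1/2}. *)
Definition ax_half (u : Z -> Z -> U6) (i j : Z) : R :=
  Rmax (alphax (u i j)) (alphax (u (i + 1)%Z j)).
Definition ay_half (u : Z -> Z -> U6) (i j : Z) : R :=
  Rmax (alphay (u i j)) (alphay (u i (j + 1)%Z)).

Definition numflux_f (u Wxp Wxm : Z -> Z -> U6) (i j : Z) : U6 :=
  uscale (ax_half u i j) (usub (Wxp i j) (Wxm i j)).
Definition numflux_g (u Wyp Wym : Z -> Z -> U6) (i j : Z) : U6 :=
  uscale (ay_half u i j) (usub (Wyp i j) (Wym i j)).

Definition euler_step (dt dx dy : R) (u Wxp Wxm Wyp Wym : Z -> Z -> U6)
  (i j : Z) : U6 :=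
  usub (usub (u i j)
         (uscale (dt / dx) (usub (numflux_f u Wxp Wxm i j)
                                 (numflux_f u Wxp Wxm (i - 1)%Z j))))
       (uscale (dt / dy) (usub (numflux_g u Wyp Wym i j)
                               (numflux_g u Wyp Wym i (j - 1)%Z))).

Definition qxp (N : nat) (u Wxp : Z -> Z -> U6) (i j : Z) : U6 :=
  uscale (/ (1 - gl_wN N)) (usub (wxp (u i j)) (uscale (gl_wN N) (Wxp i j))).
Definition qxm (N : nat) (u Wxm : Z -> Z -> U6) (i j : Z) : U6 :=
  uscale (/ (1 - gl_w1 N)) (usub (wxm (u i j)) (uscale (gl_w1 N) (Wxm (i - 1)%Z j))).
Definition qyp (N : nat) (u Wyp : Z -> Z -> U6) (i j : Z) : U6 :=
  uscale (/ (1 - gl_wN N)) (usub (wyp (u i j)) (uscale (gl_wN N) (Wyp i j))).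
Definition qym (N : nat) (u Wym : Z -> Z -> U6) (i j : Z) : U6 :=
  uscale (/ (1 - gl_w1 N)) (usub (wym (u i j)) (uscale (gl_w1 N) (Wym i (j - 1)%Z))).

Definition is_max_over (f : Z -> Z -> R) (a : R) : Prop :=
  (forall i j, f i j <= a) /\ exists i j, f i j = a.

(* U_ad is a convex cone: in conservative variables the pressure form is
   2 E(xi, xi) - (m . xi)^2 / rho, and the perspective (m . xi)^2 / rho is
   subadditive.  Choosing t proportional to ax/dx, the Euler step is
   t H^x + (1 - t) H^y, where H^x (resp. H^y) is a one-dimensional update with
   time step dt/t (resp. dt/(1-t)).  Writing u = w^+ + w^- and
   w^+ = (1 - w1) q^+ + w1 W^+_(i+1/2), w^- = (1 - w1) q^- + w1 W^-_(i-1/2),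
   each one-dimensional update is a combination of the q's and the interface
   states with coefficients 1 - w1, w1 - lambda alpha_(i+-1/2) and
   lambda alpha_(i+-1/2), all nonnegative under the CFL condition. *)
From Stdlib Require Import Reals ZArith Lra Lia List.
Import ListNotations.
Open Scope R_scope.

Lemma U6_ext (a b : U6) :
  rho a = rho b -> m1 a = m1 b -> m2 a = m2 b ->
  e11 a = e11 b -> e12 a = e12 b -> e22 a = e22 b -> a = b.
Proof. destruct a, b; simpl; intros; subst; reflexivity. Qed.

Definition pressure_form (u : U6) (x y : R) : R :=
  2 * (e11 u * x * x + 2 * e12 u * x * y + e22 u * y * y)
  - (m1 u * x + m2 u * y) ^ 2 / rho u.

Lemma pressure_form_eq (u : U6) (x y : R) : rho u <> 0 ->
  p11 u * x * x + 2 * p12 u * x * y + p22 u * y * y = pressure_form u x y.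
Proof. intros Hrho; unfold pressure_form, p11, p12, p22, v1, v2; field; exact Hrho. Qed.

Lemma Uad_pressure_form (u : U6) :
  Uad u <-> rho u > 0 /\
            forall x y, (x <> 0 \/ y <> 0) -> pressure_form u x y > 0.
Proof.
  split; intros [Hrho Hform]; split; auto; intros x y Hxy.
  - rewrite <- pressure_form_eq by lra; auto.
  - rewrite pressure_form_eq by lra; auto.
Qed.

Lemma sqr_div_add_le (sa sb ra rb : R) : 0 < ra -> 0 < rb ->
  (sa + sb) ^ 2 / (ra + rb) <= sa ^ 2 / ra + sb ^ 2 / rb.
Proof.
  intros Hra Hrb.
  assert (Hgap : sa ^ 2 / ra + sb ^ 2 / rb - (sa + sb) ^ 2 / (ra + rb)
                 = (sa * rb - sb * ra) ^ 2 / (ra * rb * (ra + rb))) by (field; lra).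
  assert (0 <= (sa * rb - sb * ra) ^ 2 / (ra * rb * (ra + rb))).
  { apply Rmult_le_pos; [apply pow2_ge_0 | apply Rlt_le, Rinv_0_lt_compat].
    apply Rmult_lt_0_compat; [apply Rmult_lt_0_compat |]; lra. }
  lra.
Qed.

Lemma Uad_uadd (a b : U6) : Uad a -> Uad b -> Uad (uadd a b).
Proof.
  rewrite !Uad_pressure_form; intros [Hra Ha] [Hrb Hb].
  split; [simpl; lra |]; intros x y Hxy.
  specialize (Ha x y Hxy); specialize (Hb x y Hxy).
  pose proof (sqr_div_add_le (m1 a * x + m2 a * y) (m1 b * x + m2 b * y)
                             (rho a) (rho b) Hra Hrb).
  unfold pressure_form in *; simpl.
  replace ((m1 a + m1 b) * x + (m2 a + m2 b) * y)
    with ((m1 a * x + m2 a * y) + (m1 b * x + m2 b * y)) by ring.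
  lra.
Qed.

Lemma Uad_uscale (c : R) (a : U6) : 0 < c -> Uad a -> Uad (uscale c a).
Proof.
  rewrite !Uad_pressure_form; intros Hc [Hra Ha].
  split; [simpl; nra |]; intros x y Hxy.
  replace (pressure_form (uscale c a) x y) with (c * pressure_form a x y)
    by (unfold pressure_form; simpl; field; lra).
  specialize (Ha x y Hxy); nra.
Qed.

Lemma uadd_uscale0 (a b : U6) : uadd a (uscale 0 b) = a.
Proof. apply U6_ext; simpl; ring. Qed.

Lemma Uad_uadd_uscale (a b : U6) (c : R) :
  Uad a -> 0 <= c -> Uad b -> Uad (uadd a (uscale c b)).
Proof.
  intros Ha [Hc | <-] Hb.
  - apply Uad_uadd; [| apply Uad_uscale]; assumption.
  - rewrite uadd_uscale0; exact Ha.
Qed.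

Definition ucomb (v0 : U6) (cvs : list (R * U6)) : U6 :=
  fold_left (fun acc cv => uadd acc (uscale (fst cv) (snd cv))) cvs v0.

Lemma Uad_ucomb (v0 : U6) (cvs : list (R * U6)) :
  Uad v0 -> Forall (fun cv => 0 <= fst cv /\ Uad (snd cv)) cvs ->
  Uad (ucomb v0 cvs).
Proof.
  revert v0; induction cvs as [| [c v] cvs IH]; intros v0 Hv0 Hcvs; [exact Hv0 |].
  inversion_clear Hcvs as [| ? ? [Hc Hv] Hrest].
  apply IH; [apply Uad_uadd_uscale |]; assumption.
Qed.

Lemma uadd_half_add_sub (a b : U6) :
  uadd (uscale (/ 2) (uadd a b)) (uscale (/ 2) (usub a b)) = a.
Proof. apply U6_ext; simpl; field. Qed.

Lemma uadd_wxp_wxm (u : U6) : uadd (wxp u) (wxm u) = u.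
Proof. apply uadd_half_add_sub. Qed.

Lemma uadd_wyp_wym (u : U6) : uadd (wyp u) (wym u) = u.
Proof. apply uadd_half_add_sub. Qed.

Section FaceUpdate.

Variables (w lam ap am : R) (wp wm Wrp Wrm Wlp Wlm : U6).

Let qp : U6 := uscale (/ (1 - w)) (usub wp (uscale w Wrp)).
Let qm : U6 := uscale (/ (1 - w)) (usub wm (uscale w Wlm)).

Lemma face_update_ucomb : w <> 1 ->
  usub (uadd wp wm)
       (uscale lam (usub (uscale ap (usub Wrp Wrm)) (uscale am (usub Wlp Wlm))))
  = ucomb (uscale (1 - w) qp)
      [(1 - w, qm); (w - lam * ap, Wrp); (lam * ap, Wrm);
       (lam * am, Wlp); (w - lam * am, Wlm)].
Proof. intros Hw; apply U6_ext; simpl; field; lra. Qed.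

Lemma Uad_face_update :
  0 < w < 1 -> 0 <= lam -> 0 <= ap -> 0 <= am ->
  lam * ap <= w -> lam * am <= w ->
  Uad qp -> Uad qm -> Uad Wrp -> Uad Wrm -> Uad Wlp -> Uad Wlm ->
  Uad (usub (uadd wp wm)
        (uscale lam (usub (uscale ap (usub Wrp Wrm)) (uscale am (usub Wlp Wlm))))).
Proof.
  intros Hw Hlam Hap Ham Hcflp Hcflm Hqp Hqm HWrp HWrm HWlp HWlm.
  rewrite face_update_ucomb by lra.
  apply Uad_ucomb; [apply Uad_uscale; [lra | exact Hqp] |].
  repeat (apply Forall_cons; [split; simpl; [nra | assumption] |]).
  apply Forall_nil.
Qed.

End FaceUpdate.

Lemma gl_w1_bounds (N : nat) : (2 <= N)%nat -> 0 < gl_w1 N < 1.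
Proof.
  intros HN; apply le_INR in HN; simpl in HN.
  assert (Hprod : 2 <= INR N * (INR N - 1)) by nra.
  unfold gl_w1; split.
  - apply Rinv_0_lt_compat; lra.
  - rewrite <- Rinv_1; apply Rinv_lt_contravar; lra.
Qed.

Lemma alphax_nonneg (u : U6) : 0 <= alphax u.
Proof.
  unfold alphax; pose proof (Rabs_pos (v1 u)); pose proof (sqrt_pos (3 * p11 u / rho u)).
  lra.
Qed.

Lemma alphay_nonneg (u : U6) : 0 <= alphay u.
Proof.
  unfold alphay; pose proof (Rabs_pos (v2 u)); pose proof (sqrt_pos (3 * p22 u / rho u)).
  lra.
Qed.

Lemma alphax_pos (u : U6) : Uad u -> 0 < alphax u.
Proof.
  intros [Hrho Hp]; specialize (Hp 1 0 (or_introl R1_neq_R0)).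
  unfold alphax; pose proof (Rabs_pos (v1 u)).
  assert (0 < sqrt (3 * p11 u / rho u)) by (apply sqrt_lt_R0, Rdiv_lt_0_compat; lra).
  lra.
Qed.

Lemma alphay_pos (u : U6) : Uad u -> 0 < alphay u.
Proof.
  intros [Hrho Hp]; specialize (Hp 0 1 (or_intror R1_neq_R0)).
  unfold alphay; pose proof (Rabs_pos (v2 u)).
  assert (0 < sqrt (3 * p22 u / rho u)) by (apply sqrt_lt_R0, Rdiv_lt_0_compat; lra).
  lra.
Qed.

Lemma ax_half_nonneg (u : Z -> Z -> U6) (i j : Z) : 0 <= ax_half u i j.
Proof. eapply Rle_trans; [apply alphax_nonneg | apply Rmax_l]. Qed.

Lemma ay_half_nonneg (u : Z -> Z -> U6) (i j : Z) : 0 <= ay_half u i j.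
Proof. eapply Rle_trans; [apply alphay_nonneg | apply Rmax_l]. Qed.

Lemma ax_half_le_max (u : Z -> Z -> U6) (ax : R) (i j : Z) :
  is_max_over (fun i j => alphax (u i j)) ax -> ax_half u i j <= ax.
Proof. intros [Hle _]; apply Rmax_lub; apply Hle. Qed.

Lemma ay_half_le_max (u : Z -> Z -> U6) (ay : R) (i j : Z) :
  is_max_over (fun i j => alphay (u i j)) ay -> ay_half u i j <= ay.
Proof. intros [Hle _]; apply Rmax_lub; apply Hle. Qed.

Lemma Uad_update_x (N : nat) (ax : R) (u Wxp Wxm : Z -> Z -> U6) (lam : R) (i j : Z) :
  (2 <= N)%nat -> 0 <= lam ->
  is_max_over (fun i j => alphax (u i j)) ax -> lam * ax <= gl_w1 N ->
  Uad (qxp N u Wxp i j) -> Uad (qxm N u Wxm i j) ->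
  Uad (Wxp i j) -> Uad (Wxm i j) -> Uad (Wxp (i - 1)%Z j) -> Uad (Wxm (i - 1)%Z j) ->
  Uad (usub (u i j) (uscale lam (usub (numflux_f u Wxp Wxm i j)
                                      (numflux_f u Wxp Wxm (i - 1)%Z j)))).
Proof.
  intros HN Hlam Hmax Hcfl Hqp Hqm HWrp HWrm HWlp HWlm.
  assert (Hface : forall k l, lam * ax_half u k l <= gl_w1 N).
  { intros k l; eapply Rle_trans; [| exact Hcfl].
    apply Rmult_le_compat_l; [exact Hlam | exact (ax_half_le_max u ax k l Hmax)]. }
  rewrite <- (uadd_wxp_wxm (u i j)) at 1.
  apply Uad_face_update with (w := gl_w1 N);
    auto using gl_w1_bounds, ax_half_nonneg.
Qed.

Lemma Uad_update_y (N : nat) (ay : R) (u Wyp Wym : Z -> Z -> U6) (lam : R) (i j : Z) :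
  (2 <= N)%nat -> 0 <= lam ->
  is_max_over (fun i j => alphay (u i j)) ay -> lam * ay <= gl_w1 N ->
  Uad (qyp N u Wyp i j) -> Uad (qym N u Wym i j) ->
  Uad (Wyp i j) -> Uad (Wym i j) -> Uad (Wyp i (j - 1)%Z) -> Uad (Wym i (j - 1)%Z) ->
  Uad (usub (u i j) (uscale lam (usub (numflux_g u Wyp Wym i j)
                                      (numflux_g u Wyp Wym i (j - 1)%Z)))).
Proof.
  intros HN Hlam Hmax Hcfl Hqp Hqm HWrp HWrm HWlp HWlm.
  assert (Hface : forall k l, lam * ay_half u k l <= gl_w1 N).
  { intros k l; eapply Rle_trans; [| exact Hcfl].
    apply Rmult_le_compat_l; [exact Hlam | exact (ay_half_le_max u ay k l Hmax)]. }
  rewrite <- (uadd_wyp_wym (u i j)) at 1.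
  apply Uad_face_update with (w := gl_w1 N);
    auto using gl_w1_bounds, ay_half_nonneg.
Qed.

Lemma usub_usub_convex (a b c : U6) (t lx ly : R) :
  usub (usub a (uscale (t * lx) b)) (uscale ((1 - t) * ly) c)
  = uadd (uscale t (usub a (uscale lx b))) (uscale (1 - t) (usub a (uscale ly c))).
Proof. apply U6_ext; simpl; ring. Qed.

Lemma cfl_split (dt dx dy ax ay : R) :
  0 < dt -> 0 < dx -> 0 < dy -> 0 < ax -> 0 < ay ->
  exists t lx ly, 0 < t < 1 /\ 0 < lx /\ 0 < ly /\
    dt / dx = t * lx /\ dt / dy = (1 - t) * ly /\
    lx * ax = (ax / dx + ay / dy) * dt /\ ly * ay = (ax / dx + ay / dy) * dt.
Proof.
  intros Hdt Hdx Hdy Hax Hay.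
  set (c := ax / dx + ay / dy).
  assert (Hc : 0 < ax / dx < c).
  { assert (0 < ax / dx) by (apply Rdiv_lt_0_compat; lra).
    assert (0 < ay / dy) by (apply Rdiv_lt_0_compat; lra).
    unfold c; lra. }
  set (t := ax / dx / c).
  assert (Hct : t * c = ax / dx) by (unfold t; field; lra).
  exists t, (dt * c / ax), (dt * c / ay); repeat split.
  - nra.
  - nra.
  - apply Rdiv_lt_0_compat; nra.
  - apply Rdiv_lt_0_compat; nra.
  - unfold t; field; repeat split; lra.
  - replace (1 - t) with ((c - ax / dx) / c) by (unfold t; field; lra).
    replace (c - ax / dx) with (ay / dy) by (unfold c; ring).
    field; repeat split; lra.
  - field; lra.
  - field; lra.
Qed.

Theorem theorem4 (N : nat) (dt dx dy ax ay : R)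
  (u Wxp Wxm Wyp Wym : Z -> Z -> U6) :
  (4 <= N)%nat ->
  0 < dt -> 0 < dx -> 0 < dy ->
  (forall i j, Uad (u i j)) ->
  (forall i j, Uad (qxp N u Wxp i j) /\ Uad (qxm N u Wxm i j)
               /\ Uad (Wxp i j) /\ Uad (Wxm i j)) ->
  (forall i j, Uad (qyp N u Wyp i j) /\ Uad (qym N u Wym i j)
               /\ Uad (Wyp i j) /\ Uad (Wym i j)) ->
  is_max_over (fun i j => alphax (u i j)) ax ->
  is_max_over (fun i j => alphay (u i j)) ay ->
  (ax / dx + ay / dy) * dt <= gl_w1 N ->
  forall i j, Uad (euler_step dt dx dy u Wxp Wxm Wyp Wym i j).
Proof.
  intros HN Hdt Hdx Hdy Hu Hx Hy Hmaxx Hmaxy Hcfl i j.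
  assert (HN2 : (2 <= N)%nat) by lia.
  assert (Hax : 0 < ax) by (destruct Hmaxx as [_ [k [l <-]]]; apply alphax_pos, Hu).
  assert (Hay : 0 < ay) by (destruct Hmaxy as [_ [k [l <-]]]; apply alphay_pos, Hu).
  destruct (cfl_split dt dx dy ax ay) as (t & lx & ly & Ht & Hlx & Hly & Edx & Edy & Elx & Ely);
    try assumption.
  unfold euler_step; rewrite Edx, Edy, usub_usub_convex.
  destruct (Hx i j) as (Hqp & Hqm & HWp & HWm), (Hx (i - 1)%Z j) as (_ & _ & HWp' & HWm').
  destruct (Hy i j) as (Hrp & Hrm & HVp & HVm), (Hy i (j - 1)%Z) as (_ & _ & HVp' & HVm').
  apply Uad_uadd; apply Uad_uscale; try lra.
  - apply (Uad_update_x N ax); auto; lra.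
  - apply (Uad_update_y N ay); auto; lra.
Qed.
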